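(* Consider the two-dimensional Euler–Poincaré equation $\partial_t\mathbf m=-\mathbf u\cdot\nabla\mathbf m-(\nabla\mathbf u)^T\cdot\mathbf m-\mathbf m\,\mathrm{div}\,\mathbf u$ with $\mathbf m=\mathbf u-\Delta\mathbf u$, restricted to fields depending only on $(x,t)$, so that $\mathbf u(x,t)=\int_{\mathbb R}G(x,y)\mathbf m(y,t)\,dy$ with $G(x,y)=\frac12e^{-|x-y|}$. For the ansatz $$\mathbf m(x,t)=\sum_{i=1}^N\big(p_i(t)\hat{\mathbf x}+v_i(t)\hat{\mathbf y}\big)\delta(x-q_i(t)),$$ both the $x$- and $y$-components of the equation yield the same equation $\dot q_i=\sum_jp_jG(q_i,q_j)$; moreover $\dot v_i=0$, and $(q_i,p_i)$ satisfy Hamilton's canonical equations $\dot q_i=\partial H/\partial p_i$, $\dot p_i=-\partial H/\partial q_i$ with $$H=\frac12\sum_{i,j=1}^N(p_ip_j+v_iv_j)G(q_i,q_j),$$ the $v_i$ being constant parameters. The variables $y_i$ canonically conjugate to $v_i$ ($\{y_i,v_j\}=\delta_{ij}$) satisfy $\dot y_i=\sum_jv_jG(q_i,q_j)=\hat{\mathbf y}\cdot\mathbf u(q_i,t)$.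
   Context: $\hat{\mathbf x},\hat{\mathbf y}$ are the Cartesian unit vectors; solutions are understood in the weak (distributional) sense, with the derivative of $G$ at its kink interpreted as the average of the one-sided limits, consistently with $\partial H/\partial q_i$. The $q_i$ are assumed distinct. *)

From Stdlib Require Import Reals.
From Coquelicot Require Import Coquelicot.
Open Scope R_scope.

Fixpoint sumN (N : nat) (f : nat -> R) : R :=
  match N with O => 0 | S n => sumN n f + f n end.

(* Green's function of 1 - d^2/dx^2 on R *)
Definition G (x y : R) : R := / 2 * exp (- Rabs (x - y)).

(* dG x y = derivative of G in its first argument; at the kink x = y it is
   the average of the one-sided limits (-1/2 and +1/2), i.e. 0
   (Coquelicot's [sign 0 = 0]). *)
Definition dG (x y : R) : R := - / 2 * sign (x - y) * exp (- Rabs (x - y)).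

(* Ansatz: m = sum_i (p_i xhat + v_i yhat) delta(x - q_i).
   Trajectories are indexed by i < N : q p v : nat -> R -> R. *)

(* pairing <sum_i a_i(t) delta(. - q_i(t)), psi> *)
Definition mpair (N : nat) (a q : nat -> R -> R) (t : R) (psi : R -> R) : R :=
  sumN N (fun i => a i t * psi (q i t)).

(* u = G * m : components u1 (x-component, weights p) and u2 (weights v),
   and their x-derivatives (with the kink convention). *)
Definition ufield (N : nat) (a q : nat -> R -> R) (x t : R) : R :=
  sumN N (fun j => a j t * G x (q j t)).
Definition uxfield (N : nat) (a q : nat -> R -> R) (x t : R) : R :=
  sumN N (fun j => a j t * dG x (q j t)).

Definition dx (phi : R -> R -> R) (x t : R) : R := Derive (fun x' => phi x' t) x.
Definition dt (phi : R -> R -> R) (x t : R) : R := Derive (fun t' => phi x t') t.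

Fixpoint Ck (k : nat) (phi : R -> R -> R) : Prop :=
  match k with
  | O => forall x t, continuity_2d_pt phi x t
  | S k' => (forall x t, ex_derive (fun x' => phi x' t) x /\
                          ex_derive (fun t' => phi x t') t)
            /\ Ck k' (dx phi) /\ Ck k' (dt phi)
  end.

Definition test_function (phi : R -> R -> R) : Prop :=
  (forall k, Ck k phi) /\
  exists M, forall x t, M < Rabs x \/ M < Rabs t -> phi x t = 0.

(* Weak form of the x-component of the reduced Euler-Poincare equation
     d_t m1 = - u1 d_x m1 - (d_x u1) m1 - (d_x u2) m2 - m1 d_x u1,
   paired with phi and integrated in t; the term -u1 d_x m1 is paired as
   <m1, d_x (u1 phi)> = <m1, u1 d_x phi + (d_x u1) phi>. *)
Definition weak_integrand_x (N : nat) (q p v : nat -> R -> R)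
    (phi : R -> R -> R) (t : R) : R :=
  mpair N p q t (fun x => dt phi x t)
  + mpair N p q t (fun x => ufield N p q x t * dx phi x t
                           + uxfield N p q x t * phi x t)
  - mpair N p q t (fun x => uxfield N p q x t * phi x t)
  - mpair N v q t (fun x => uxfield N v q x t * phi x t)
  - mpair N p q t (fun x => uxfield N p q x t * phi x t).

(* y-component:  d_t m2 = - u1 d_x m2 - 0 - m2 d_x u1  (d_y u = 0). *)
Definition weak_integrand_y (N : nat) (q p v : nat -> R -> R)
    (phi : R -> R -> R) (t : R) : R :=
  mpair N v q t (fun x => dt phi x t)
  + mpair N v q t (fun x => ufield N p q x t * dx phi x t
                           + uxfield N p q x t * phi x t)
  - mpair N v q t (fun x => uxfield N p q x t * phi x t).

Definition weak_solution_x (N : nat) (q p v : nat -> R -> R) : Prop :=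
  forall phi, test_function phi ->
  forall T, (forall x t, T < Rabs t -> phi x t = 0) ->
  is_RInt (weak_integrand_x N q p v phi) (- T) T 0.

Definition weak_solution_y (N : nat) (q p v : nat -> R -> R) : Prop :=
  forall phi, test_function phi ->
  forall T, (forall x t, T < Rabs t -> phi x t = 0) ->
  is_RInt (weak_integrand_y N q p v phi) (- T) T 0.

Definition Ham (N : nat) (q p v : nat -> R) : R :=
  / 2 * sumN N (fun i => sumN N (fun j => (p i * p j + v i * v j) * G (q i) (q j))).

Definition upd (f : nat -> R) (i : nat) (x : R) : nat -> R :=
  fun j => if Nat.eqb j i then x else f j.

Definition is_C1 (f : R -> R) : Prop :=
  forall t, ex_derive f t /\ continuous (Derive f) t.

(* Pairing either component of the equation with a test function phi gives
     d/dt <m, phi> + sum_j (A_j phi(q_j, t) + B_j d_x phi(q_j, t)),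
   where B_j = a_j (u_1(q_j) - dq_j/dt) for the weights a = p (resp. v), and A_j
   collects the remaining coefficients of phi(q_j, t).  The time derivative
   integrates to zero, so the equation holds weakly iff the distribution
   sum_j (A_j delta_{q_j} - B_j delta'_{q_j}) annihilates every test function,
   i.e. iff all A_j and B_j vanish: since the particles stay apart, a product of
   a short bump in t around t0 with a narrow bump e in x around q_i(t0) isolates
   A_i(t0), and the same with (x - q_i(t0)) e isolates B_i(t0).  Then A_i = 0
   is the momentum equation (resp. dv_i/dt = 0) and B_i = 0 says
   dq_i/dt = u_1(q_i) wherever the weight is nonzero.  The Hamiltonian
   identities differentiate the double sum term by term: G(., q_j) is
   differentiable away from q_j, and the diagonal terms G(q_i, q_i) = 1/2 are
   constant. *)

From Stdlib Require Import Reals Lra Lia Factorial.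
From Coquelicot Require Import Coquelicot.
Open Scope R_scope.

Lemma is_derive_cst (c x : R) : is_derive (fun _ : R => c) x 0.
Proof. apply (@is_derive_const R_AbsRing R_NormedModule). Qed.

Lemma is_derive_eq (f : R -> R) (x l l' : R) : is_derive f x l -> l = l' -> is_derive f x l'.
Proof. now intros H <-. Qed.

Lemma is_derive_mulr (f : R -> R) (x df c : R) :
  is_derive f x df -> is_derive (fun y => f y * c) x (df * c).
Proof. apply (@is_derive_scal_l R_AbsRing R_NormedModule). Qed.

Lemma ball_Rabs (x e y : R) : ball x e y -> Rabs (y - x) < e.
Proof. exact (fun H => H). Qed.

Lemma continuous_Rplus (f g : R -> R) t : continuous f t -> continuous g t ->
  continuous (fun s => f s + g s) t.
Proof. apply (continuous_plus f g). Qed.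

Lemma continuous_Rmult (f g : R -> R) t : continuous f t -> continuous g t ->
  continuous (fun s => f s * g s) t.
Proof. apply (continuous_mult f g). Qed.

Lemma C1_continuous f t : is_C1 f -> continuous f t.
Proof. intros H. apply (ex_derive_continuous f), H. Qed.

Lemma continuous_eps_delta (f : R -> R) t0 eps : continuous f t0 -> 0 < eps ->
  exists d, 0 < d /\ forall t, Rabs (t - t0) < d -> Rabs (f t - f t0) < eps.
Proof.
  intros Hc He. apply continuity_pt_filterlim in Hc.
  destruct (Hc eps He) as [d [Hd H]]. exists d. split; [exact Hd|]. intros t Ht.
  destruct (Req_dec t t0) as [->|Hn].
  - unfold Rminus. rewrite Rplus_opp_r, Rabs_R0. exact He.
  - apply H. split; [split; [exact I | auto] | exact Ht].
Qed.

Lemma sign_persistence (h : R -> R) t0 : continuous h t0 -> h t0 <> 0 ->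
  exists d, 0 < d /\ forall t, Rabs (t - t0) < d -> 0 < h t0 * h t.
Proof.
  intros Hc Hn.
  destruct (continuous_eps_delta h t0 (Rabs (h t0)) Hc) as [d [Hd Hb]];
    [apply Rabs_pos_lt, Hn|].
  exists d. split; [exact Hd|]. intros t Ht. specialize (Hb t Ht).
  destruct (Rlt_dec 0 (h t0)).
  - rewrite (Rabs_pos_eq (h t0)) in Hb by lra. apply Rabs_def2 in Hb. nra.
  - rewrite (Rabs_left (h t0)) in Hb by lra. apply Rabs_def2 in Hb. nra.
Qed.

Lemma continuous_sign_comp (d : R -> R) t : continuous d t -> d t <> 0 ->
  continuous (fun s => sign (d s)) t.
Proof.
  intros Hd Hn. destruct (sign_persistence d t Hd Hn) as [e [He Hs]].
  apply (continuous_ext_loc _ (fun _ => sign (d t))); [|apply continuous_const].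
  exists (mkposreal e He). intros y Hy. specialize (Hs y (ball_Rabs _ _ _ Hy)).
  destruct (Rlt_dec 0 (d t)).
  - rewrite (sign_eq_1 (d t)), (sign_eq_1 (d y)) by nra. reflexivity.
  - rewrite (sign_eq_m1 (d t)), (sign_eq_m1 (d y)) by nra. reflexivity.
Qed.

Lemma is_derive_eq0_outside (f : R -> R) c r x :
  (forall y, r <= Rabs (y - c) -> f y = 0) -> r < Rabs (x - c) -> is_derive f x 0.
Proof.
  intros Hz Hx. assert (Hd : 0 < Rabs (x - c) - r) by lra.
  apply (is_derive_ext_loc (fun _ => 0)); [|apply is_derive_cst].
  exists (mkposreal _ Hd). intros t Ht. apply ball_Rabs in Ht. simpl in Ht.
  symmetry. apply Hz.
  pose proof (Rabs_triang_inv (x - c) (x - t)). rewrite Rabs_minus_sym in Ht.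
  replace (x - c - (x - t)) with (t - c) in * by ring. lra.
Qed.

Lemma is_RInt_eq0_fun (w : R -> R) a b :
  (forall t, Rmin a b < t < Rmax a b -> w t = 0) -> is_RInt w a b 0.
Proof.
  intros H. apply (is_RInt_ext (fun _ => 0)); [intros; symmetry; auto|].
  pose proof (@is_RInt_const R_NormedModule a b 0) as Hc.
  replace (scal (b - a) (0 : R_NormedModule)) with 0 in Hc
    by (unfold scal; simpl; unfold mult; simpl; ring).
  exact Hc.
Qed.

Lemma not_is_RInt_0_of_pos (w : R -> R) T l r : - T < l -> l < r -> r < T ->
  (forall t, continuous w t) -> (forall t, l < t < r -> 0 < w t) ->
  (forall t, t < l \/ r < t -> w t = 0) -> ~ is_RInt w (- T) T 0.
Proof.
  intros H1 H2 H3 Hc Hp Hz HI.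
  assert (Hout : forall a b, a < b -> (forall t, a < t < b -> t < l \/ r < t) ->
            is_RInt w a b 0).
  { intros a b Hab Hab'. apply is_RInt_eq0_fun.
    intros t Ht. rewrite Rmin_left, Rmax_right in Ht by lra. apply Hz, Hab', Ht. }
  assert (Hmid : is_RInt w l r (RInt w l r)).
  { apply (@RInt_correct R_CompleteNormedModule), (@ex_RInt_continuous R_CompleteNormedModule).
    intros; apply Hc. }
  pose proof (is_RInt_Chasles w _ _ _ _ _
    (is_RInt_Chasles w _ _ _ _ _ (Hout (- T) l H1 ltac:(intros; lra)) Hmid)
    (Hout r T H3 ltac:(intros; lra))) as Hall.
  apply (@is_RInt_unique R_CompleteNormedModule) in Hall, HI. rewrite HI in Hall.
  unfold plus in Hall; simpl in Hall.
  assert (0 < RInt w l r) by (apply RInt_gt_0; auto). lra.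
Qed.

Lemma uniform_radius_finite N (P : nat -> R -> Prop) :
  (forall j, (j < N)%nat -> exists r, 0 < r /\ forall r', 0 < r' <= r -> P j r') ->
  exists r, 0 < r /\ forall j, (j < N)%nat -> forall r', 0 < r' <= r -> P j r'.
Proof.
  induction N as [|N IH]; intros H.
  - exists 1. split; [lra | intros; lia].
  - destruct IH as [r1 [H1 Hr1]]; [intros; apply H; lia|].
    destruct (H N) as [r2 [H2 Hr2]]; [lia|].
    exists (Rmin r1 r2). split; [apply Rmin_pos; assumption|].
    intros j Hj r' Hr'. pose proof (Rmin_l r1 r2). pose proof (Rmin_r r1 r2).
    destruct (Nat.eq_dec j N) as [->|Hn]; [apply Hr2; lra | apply Hr1; [lia|lra]].
Qed.

Lemma sumN_ext N f g : (forall i, (i < N)%nat -> f i = g i) -> sumN N f = sumN N g.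
Proof.
  induction N as [|N IH]; intros H; simpl; [reflexivity|].
  rewrite IH, H by (first [lia | intros; apply H; lia]). reflexivity.
Qed.

Lemma sumN_plus N f g : sumN N (fun i => f i + g i) = sumN N f + sumN N g.
Proof. induction N as [|N IH]; simpl; [|rewrite IH]; lra. Qed.

Lemma sumN_minus N f g : sumN N (fun i => f i - g i) = sumN N f - sumN N g.
Proof. induction N as [|N IH]; simpl; [|rewrite IH]; lra. Qed.

Lemma sumN_scal N c f : sumN N (fun i => c * f i) = c * sumN N f.
Proof. induction N as [|N IH]; simpl; [|rewrite IH]; lra. Qed.

Lemma sumN_eq0 N f : (forall i, (i < N)%nat -> f i = 0) -> sumN N f = 0.
Proof.
  induction N as [|N IH]; intros H; simpl; [reflexivity|].
  rewrite IH, H by (first [lia | intros; apply H; lia]). ring.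
Qed.

Lemma sumN_single N i f : (i < N)%nat ->
  (forall j, (j < N)%nat -> j <> i -> f j = 0) -> sumN N f = f i.
Proof.
  induction N as [|N IH]; intros Hi H; simpl; [lia|].
  destruct (Nat.eq_dec i N) as [->|HiN].
  - rewrite sumN_eq0 by (intros j Hj; apply H; lia). ring.
  - rewrite IH, (H N) by (first [lia | intros; apply H; lia]). ring.
Qed.

Lemma sumN_delta N i c : (i < N)%nat ->
  sumN N (fun k => if Nat.eqb k i then c k else 0) = c i.
Proof.
  intros Hi. rewrite (sumN_single N i); [now rewrite Nat.eqb_refl | exact Hi |].
  intros j _ Hji. apply Nat.eqb_neq in Hji. now rewrite Hji.
Qed.

Lemma is_derive_sumN N (f : nat -> R -> R) df x :
  (forall i, (i < N)%nat -> is_derive (f i) x (df i)) ->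
  is_derive (fun y => sumN N (fun i => f i y)) x (sumN N df).
Proof.
  induction N as [|N IH]; intros H; simpl.
  - apply is_derive_cst.
  - apply (is_derive_plus (fun y => sumN N (fun i => f i y)) (f N)).
    + apply IH; intros; apply H; lia.
    + apply H; lia.
Qed.

Lemma continuous_sumN N (f : nat -> R -> R) x :
  (forall i, (i < N)%nat -> continuous (f i) x) ->
  continuous (fun y => sumN N (fun i => f i y)) x.
Proof.
  induction N as [|N IH]; intros H; simpl.
  - apply continuous_const.
  - apply (continuous_plus (fun y => sumN N (fun i => f i y)) (f N)).
    + apply IH; intros; apply H; lia.
    + apply H; lia.
Qed.

(** * The Green's function *)

Lemma G_sym x y : G x y = G y x.
Proof. unfold G. now rewrite Rabs_minus_sym. Qed.

Lemma dG_diag x : dG x x = 0.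
Proof. unfold dG. replace (x - x) with 0 by ring. rewrite sign_0. ring. Qed.

Lemma is_derive_G_l x y : x <> y -> is_derive (fun z => G z y) x (dG x y).
Proof. intros Hxy. unfold G, dG. auto_derive; [lra | unfold Rminus; ring]. Qed.

Lemma is_derive_G_r x y : x <> y -> is_derive (fun z => G x z) y (dG y x).
Proof.
  intros Hxy. apply (is_derive_ext (fun z => G z x)); [intros; apply G_sym|].
  apply is_derive_G_l; auto.
Qed.

Lemma continuous_exp_neg_dist (f g : R -> R) t : continuous f t -> continuous g t ->
  continuous (fun s => exp (- Rabs (f s - g s))) t.
Proof.
  intros Hf Hg.
  apply (continuous_comp (fun s => - Rabs (f s - g s)) exp); [|apply continuous_exp].
  apply (continuous_opp (fun s => Rabs (f s - g s))).
  apply (continuous_comp (fun s => f s - g s) Rabs); [|apply continuous_Rabs].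
  apply (continuous_minus f g); auto.
Qed.

Lemma continuous_G_comp (f g : R -> R) t : continuous f t -> continuous g t ->
  continuous (fun s => G (f s) (g s)) t.
Proof.
  intros Hf Hg. apply (continuous_mult (fun _ => / 2)); [apply continuous_const|].
  apply continuous_exp_neg_dist; auto.
Qed.

Lemma continuous_dG_comp (f g : R -> R) t : continuous f t -> continuous g t ->
  f t <> g t -> continuous (fun s => dG (f s) (g s)) t.
Proof.
  intros Hf Hg Hn. apply (continuous_mult (fun s => - / 2 * sign (f s - g s))).
  - apply (continuous_mult (fun _ => - / 2)); [apply continuous_const|].
    apply (continuous_sign_comp (fun s => f s - g s)); [|lra].
    apply (continuous_minus f g); auto.
  - apply continuous_exp_neg_dist; auto.
Qed.

(** * The Hamiltonian *)

Lemma upd_same f i x : upd f i x i = x.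
Proof. unfold upd. now rewrite Nat.eqb_refl. Qed.

Lemma upd_other f i x k : k <> i -> upd f i x k = f k.
Proof. intros H. unfold upd. apply Nat.eqb_neq in H. now rewrite H. Qed.

Lemma is_derive_half_double_sum N i (W : nat -> nat -> R -> R) (a b : nat -> R) x0 :
  (i < N)%nat ->
  (forall k l, (k < N)%nat -> (l < N)%nat ->
     is_derive (W k l) x0
       ((if Nat.eqb k i then a l else 0) + (if Nat.eqb l i then b k else 0))) ->
  is_derive (fun x => / 2 * sumN N (fun k => sumN N (fun l => W k l x))) x0
     (/ 2 * (sumN N a + sumN N b)).
Proof.
  intros Hi H. apply is_derive_scal. eapply is_derive_eq.
  - apply (is_derive_sumN N (fun k x => sumN N (fun l => W k l x))). intros k Hk.
    apply (is_derive_sumN N (fun l x => W k l x)). intros l Hl. apply H; auto.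
  - rewrite (sumN_ext N _ (fun k => (if Nat.eqb k i then sumN N a else 0) + b k)).
    + now rewrite sumN_plus, (sumN_delta N i (fun _ => sumN N a)).
    + intros k Hk. rewrite sumN_plus, (sumN_delta N i (fun _ => b k)) by exact Hi.
      f_equal. destruct (Nat.eqb k i); [reflexivity|]. apply sumN_eq0; auto.
Qed.

Lemma Ham_swap N q p v : Ham N q p v = Ham N q v p.
Proof.
  unfold Ham. f_equal. apply sumN_ext. intros k _. apply sumN_ext. intros l _. ring.
Qed.

Lemma is_derive_Ham_q N (q p v : nat -> R) i : (i < N)%nat ->
  (forall j, (j < N)%nat -> j <> i -> q i <> q j) ->
  is_derive (fun x => Ham N (upd q i x) p v) (q i)
    (sumN N (fun j => (p i * p j + v i * v j) * dG (q i) (q j))).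
Proof.
  intros Hi Hd. unfold Ham. eapply is_derive_eq.
  - apply (is_derive_half_double_sum N i
      (fun k l x => (p k * p l + v k * v l) * G (upd q i x k) (upd q i x l))
      (fun l => (p i * p l + v i * v l) * dG (q i) (q l))
      (fun k => (p k * p i + v k * v i) * dG (q i) (q k))); [exact Hi|].
    intros k l Hk Hl.
    destruct (Nat.eqb_spec k i) as [->|Hki]; destruct (Nat.eqb_spec l i) as [->|Hli].
    + apply (is_derive_ext (fun _ => (p i * p i + v i * v i) * G 0 0)).
      { intros x. rewrite upd_same. unfold G. now replace (x - x) with (0 - 0) by ring. }
      eapply is_derive_eq; [apply is_derive_cst|]. rewrite dG_diag. ring.
    + apply (is_derive_ext (fun x => (p i * p l + v i * v l) * G x (q l))).
      { intros x. now rewrite upd_same, upd_other. }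
      eapply is_derive_eq; [apply is_derive_scal, is_derive_G_l; apply Hd; auto|]. ring.
    + apply (is_derive_ext (fun x => (p k * p i + v k * v i) * G (q k) x)).
      { intros x. now rewrite upd_same, upd_other. }
      eapply is_derive_eq; [apply is_derive_scal, is_derive_G_r|ring].
      intros E. apply (Hd k); auto.
    + apply (is_derive_ext (fun _ => (p k * p l + v k * v l) * G (q k) (q l))).
      { intros x. now rewrite !upd_other. }
      eapply is_derive_eq; [apply is_derive_cst|ring].
  - rewrite <- sumN_plus, <- (sumN_scal N (/ 2)). apply sumN_ext. intros j _. field.
Qed.

Lemma is_derive_Ham_p N (q p v : nat -> R) i : (i < N)%nat ->
  is_derive (fun x => Ham N q (upd p i x) v) (p i) (sumN N (fun j => p j * G (q i) (q j))).
Proof.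
  intros Hi. unfold Ham. eapply is_derive_eq.
  - apply (is_derive_half_double_sum N i
      (fun k l x => (upd p i x k * upd p i x l + v k * v l) * G (q k) (q l))
      (fun l => p l * G (q i) (q l)) (fun k => p k * G (q k) (q i))); [exact Hi|].
    intros k l Hk Hl.
    destruct (Nat.eqb_spec k i) as [->|Hki]; destruct (Nat.eqb_spec l i) as [->|Hli].
    + apply (is_derive_ext (fun x => (x * x + v i * v i) * G (q i) (q i))).
      { intros x. now rewrite upd_same. }
      auto_derive; [exact I|ring].
    + apply (is_derive_ext (fun x => (x * p l + v i * v l) * G (q i) (q l))).
      { intros x. now rewrite upd_same, upd_other. }
      auto_derive; [exact I|ring].
    + apply (is_derive_ext (fun x => (p k * x + v k * v i) * G (q k) (q i))).
      { intros x. now rewrite upd_same, upd_other. }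
      auto_derive; [exact I|ring].
    + apply (is_derive_ext (fun _ => (p k * p l + v k * v l) * G (q k) (q l))).
      { intros x. now rewrite !upd_other. }
      eapply is_derive_eq; [apply is_derive_cst|ring].
  - rewrite <- sumN_plus, <- (sumN_scal N (/ 2)). apply sumN_ext. intros j _.
    rewrite (G_sym (q j)). field.
Qed.

Lemma is_derive_Ham_v N (q p v : nat -> R) i : (i < N)%nat ->
  is_derive (fun x => Ham N q p (upd v i x)) (v i) (sumN N (fun j => v j * G (q i) (q j))).
Proof.
  intros Hi. apply (is_derive_ext (fun x => Ham N q (upd v i x) p)).
  - intros x. apply Ham_swap.
  - apply is_derive_Ham_p; exact Hi.
Qed.

(** * Smooth compactly supported functions *)

(* [flat 0] is the classical smooth function [exp (-1/y)] with all derivatives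
   vanishing at 0; the family [flat k] is closed under differentiation. *)
Definition flat (k : nat) (y : R) : R :=
  if Rlt_dec 0 y then (/ y) ^ k * exp (- / y) else 0.

Lemma flat_nonneg k y : 0 <= flat k y.
Proof.
  unfold flat. destruct (Rlt_dec 0 y); [|lra].
  apply Rmult_le_pos; [apply pow_le, Rlt_le, Rinv_0_lt_compat; lra | apply Rlt_le, exp_pos].
Qed.

Lemma flat_pos k y : 0 < y -> 0 < flat k y.
Proof.
  intros Hy. unfold flat. destruct (Rlt_dec 0 y); [|lra].
  apply Rmult_lt_0_compat; [apply pow_lt, Rinv_0_lt_compat; lra | apply exp_pos].
Qed.

Lemma flat_eq0 k y : y <= 0 -> flat k y = 0.
Proof. intros Hy. unfold flat. destruct (Rlt_dec 0 y); [lra|reflexivity]. Qed.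

Lemma pow_mul_exp_neg_le (z : R) (m : nat) : 0 < z ->
  z ^ m * exp (- z) <= INR (fact (S m)) / z.
Proof.
  intros Hz.
  assert (Htaylor : z ^ S m / INR (fact (S m)) <= exp z).
  { eapply Rle_trans; [|apply (exp_ge_taylor z (S m)); lra].
    rewrite tech5.
    assert (0 <= sum_f_R0 (fun k => z ^ k / INR (fact k)) m); [|lra].
    apply cond_pos_sum. intros n. apply Rmult_le_pos; [apply pow_le; lra|].
    apply Rlt_le, Rinv_0_lt_compat, INR_fact_lt_0. }
  pose proof (INR_fact_lt_0 (S m)). pose proof (exp_pos z).
  rewrite exp_Ropp. apply (Rmult_le_reg_r (z * exp z / INR (fact (S m)))).
  { apply Rdiv_lt_0_compat; [nra | lra]. }
  replace (z ^ m * / exp z * (z * exp z / INR (fact (S m))))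
    with (z ^ S m / INR (fact (S m))) by (rewrite <- tech_pow_Rmult; field; split; lra).
  replace (INR (fact (S m)) / z * (z * exp z / INR (fact (S m)))) with (exp z)
    by (field; repeat split; lra).
  exact Htaylor.
Qed.

Lemma flat_le k h : 0 < h -> flat k h <= INR (fact (S k)) * h.
Proof.
  intros Hh. unfold flat. destruct (Rlt_dec 0 h); [|lra].
  eapply Rle_trans; [apply pow_mul_exp_neg_le, Rinv_0_lt_compat, Hh|].
  right. field. lra.
Qed.

Lemma is_derive_flat_pos k y : 0 < y ->
  is_derive (flat k) y (- INR k * flat (S k) y + flat (S (S k)) y).
Proof.
  intros Hy. apply (is_derive_ext_loc (fun y => (/ y) ^ k * exp (- / y))).
  - exists (mkposreal y Hy). intros t Ht. apply ball_Rabs, Rabs_def2 in Ht. simpl in Ht.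
    unfold flat. destruct (Rlt_dec 0 t); [reflexivity|lra].
  - unfold flat. destruct (Rlt_dec 0 y); [|lra].
    auto_derive; [repeat split; lra|]. destruct k; simpl; field; lra.
Qed.

Lemma is_derive_flat_0 k : is_derive (flat k) 0 0.
Proof.
  apply is_derive_Reals. intros eps Heps.
  pose proof (INR_fact_lt_0 (S (S k))) as HF.
  set (F := INR (fact (S (S k)))) in *.
  assert (Hd : 0 < eps / F) by (apply Rdiv_lt_0_compat; lra).
  exists (mkposreal _ Hd). intros h Hh0 Hh. cbn [pos] in Hh.
  rewrite Rplus_0_l, (flat_eq0 k 0), Rminus_0_r, Rminus_0_r by lra.
  destruct (Rlt_dec 0 h) as [Hp|Hn].
  - replace (flat k h / h) with (flat (S k) h)
      by (unfold flat; destruct (Rlt_dec 0 h); [simpl; field|]; lra).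
    rewrite Rabs_pos_eq in * by (apply flat_nonneg || lra).
    eapply Rle_lt_trans; [apply flat_le, Hp|]. fold F.
    apply (Rmult_lt_compat_l F) in Hh; [|exact HF].
    replace (F * (eps / F)) with eps in Hh by (field; lra). exact Hh.
  - rewrite flat_eq0 by lra. unfold Rdiv. rewrite Rmult_0_l, Rabs_R0. exact Heps.
Qed.

Lemma is_derive_flat k y :
  is_derive (flat k) y (- INR k * flat (S k) y + flat (S (S k)) y).
Proof.
  destruct (Rlt_dec 0 y) as [Hy|Hy]; [apply is_derive_flat_pos, Hy|].
  rewrite !flat_eq0 by lra. replace (- INR k * 0 + 0) with 0 by ring.
  destruct (Req_dec y 0) as [->|Hy0]; [apply is_derive_flat_0|].
  apply (is_derive_ext_loc (fun _ => 0)); [|apply is_derive_cst].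
  assert (Hy' : 0 < - y) by lra. exists (mkposreal _ Hy'). intros t Ht.
  apply ball_Rabs, Rabs_def2 in Ht. simpl in Ht. rewrite flat_eq0 by lra. reflexivity.
Qed.

(* A syntax for smooth functions, closed under differentiation, so that the
   test functions built from it satisfy [Ck k] for every [k] by induction. *)
Inductive sexpr : Type :=
  | SConst (c : R)
  | SVar
  | SAdd (e1 e2 : sexpr)
  | SMul (e1 e2 : sexpr)
  | SFlat (k : nat) (a b : R).

Fixpoint seval (e : sexpr) (x : R) : R :=
  match e with
  | SConst c => c
  | SVar => x
  | SAdd e1 e2 => seval e1 x + seval e2 x
  | SMul e1 e2 => seval e1 x * seval e2 x
  | SFlat k a b => flat k (a * x + b)
  end.

Fixpoint sderiv (e : sexpr) : sexpr :=
  match e with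
  | SConst _ => SConst 0
  | SVar => SConst 1
  | SAdd e1 e2 => SAdd (sderiv e1) (sderiv e2)
  | SMul e1 e2 => SAdd (SMul (sderiv e1) e2) (SMul e1 (sderiv e2))
  | SFlat k a b =>
      SMul (SConst a) (SAdd (SMul (SConst (- INR k)) (SFlat (S k) a b)) (SFlat (S (S k)) a b))
  end.

Lemma is_derive_seval e x : is_derive (seval e) x (seval (sderiv e) x).
Proof.
  induction e as [c| |e1 IH1 e2 IH2|e1 IH1 e2 IH2|k a b]; simpl.
  - apply is_derive_cst.
  - apply (@is_derive_id R_AbsRing).
  - apply (is_derive_plus (seval e1) (seval e2)); assumption.
  - eapply is_derive_eq; [apply (is_derive_mult (seval e1) (seval e2) _ _ _ IH1 IH2)|].
    + intros; apply Rmult_comm.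
    + unfold plus, mult; simpl. ring.
  - eapply is_derive_eq.
    + apply (is_derive_comp (flat k) (fun x => a * x + b)); [apply is_derive_flat|].
      auto_derive; reflexivity.
    + unfold scal; simpl; unfold mult; simpl. ring.
Qed.

Lemma Derive_seval e x : Derive (seval e) x = seval (sderiv e) x.
Proof. apply is_derive_unique, is_derive_seval. Qed.

Lemma continuous_seval e x : continuous (seval e) x.
Proof. apply (ex_derive_continuous (seval e)). eexists. apply is_derive_seval. Qed.

Definition bump (c r : R) : sexpr :=
  SMul (SFlat 0 (/ r) (1 - c / r)) (SFlat 0 (- / r) (1 + c / r)).

Lemma seval_bump c r x : 0 < r ->
  seval (bump c r) x = flat 0 (1 + (x - c) / r) * flat 0 (1 - (x - c) / r).
Proof. intros Hr. simpl. f_equal; f_equal; field; lra. Qed.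

Lemma Rabs_div_pos (a r : R) : 0 < r -> Rabs (a / r) = Rabs a / r.
Proof. intros Hr. unfold Rdiv. rewrite Rabs_mult, Rabs_inv, (Rabs_pos_eq r); lra. Qed.

Lemma bump_eq0 c r x : 0 < r -> r <= Rabs (x - c) -> seval (bump c r) x = 0.
Proof.
  intros Hr Hx. rewrite seval_bump by exact Hr.
  assert (Hy : 1 <= Rabs ((x - c) / r)).
  { rewrite Rabs_div_pos by exact Hr. apply Rle_div_r; lra. }
  destruct (Rle_dec 0 ((x - c) / r)).
  - rewrite Rabs_pos_eq in Hy by lra. rewrite (flat_eq0 0 (1 - _)) by lra. ring.
  - rewrite Rabs_left in Hy by lra. rewrite (flat_eq0 0 (1 + _)) by lra. ring.
Qed.

Lemma bump_pos c r x : 0 < r -> Rabs (x - c) < r -> 0 < seval (bump c r) x.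
Proof.
  intros Hr Hx. rewrite seval_bump by exact Hr.
  assert (Hy : Rabs ((x - c) / r) < 1).
  { rewrite Rabs_div_pos by exact Hr. apply Rlt_div_l; lra. }
  apply Rabs_def2 in Hy. apply Rmult_lt_0_compat; apply flat_pos; lra.
Qed.

Lemma Ck_ext k (f g : R -> R -> R) : (forall x t, f x t = g x t) -> Ck k f -> Ck k g.
Proof.
  revert f g; induction k as [|k IH]; intros f g E H; simpl in *.
  - intros x t. apply (continuity_2d_pt_ext f g); auto.
  - destruct H as [H1 [H2 H3]]. split; [|split].
    + intros x t. destruct (H1 x t) as [Ha Hb]. split.
      * apply (ex_derive_ext (fun x' => f x' t)); auto.
      * apply (ex_derive_ext (fun t' => f x t')); auto.
    + apply (IH (dx f)); auto. intros x t. unfold dx. apply Derive_ext; auto.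
    + apply (IH (dt f)); auto. intros x t. unfold dt. apply Derive_ext; auto.
Qed.

Lemma Ck_seval_tensor k : forall e1 e2, Ck k (fun x t => seval e1 x * seval e2 t).
Proof.
  induction k as [|k IH]; intros e1 e2; simpl.
  - intros x t. apply continuity_2d_pt_mult.
    + apply (continuity_1d_2d_pt_comp (seval e1) (fun u _ => u)).
      * apply continuity_pt_filterlim, continuous_seval.
      * apply continuity_2d_pt_id1.
    + apply (continuity_1d_2d_pt_comp (seval e2) (fun _ v => v)).
      * apply continuity_pt_filterlim, continuous_seval.
      * apply continuity_2d_pt_id2.
  - split; [|split].
    + intros x t. split; eexists.
      * apply is_derive_mulr, is_derive_seval.
      * apply is_derive_scal, is_derive_seval.
    + apply (Ck_ext k (fun x t => seval (sderiv e1) x * seval e2 t)); [|apply IH].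
      intros x t. symmetry. apply is_derive_unique, is_derive_mulr, is_derive_seval.
    + apply (Ck_ext k (fun x t => seval e1 x * seval (sderiv e2) t)); [|apply IH].
      intros x t. symmetry. apply is_derive_unique, is_derive_scal, is_derive_seval.
Qed.

Lemma ex_diff_n_of_Ck n : forall phi, (forall k, Ck k phi) -> forall x y, ex_diff_n phi n x y.
Proof.
  induction n as [|n IH]; intros phi H x y; simpl.
  - split; [exact (H O x y) | exact I].
  - destruct (H 1%nat) as [H1 _].
    split; [exact (H O x y)|]. split; [exact (proj1 (H1 x y))|].
    split; [exact (proj2 (H1 x y))|]. split.
    + apply (IH (dx phi)). intros k. exact (proj1 (proj2 (H (S k)))).
    + apply (IH (dt phi)). intros k. exact (proj2 (proj2 (H (S k)))).
Qed.

Lemma DL_pol_1 f x y u v :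
  DL_pol 1 f x y u v = f x y + (dx f x y * u + dt f x y * v).
Proof.
  unfold DL_pol, differential, partial_derive, dx, dt. simpl.
  unfold Binomial.C. simpl. field.
Qed.

Lemma quadratic_le_linear (D m eps : R) : 0 <= m -> 0 < eps -> m < eps / (Rabs D + 1) ->
  D * m ^ 2 <= eps * m.
Proof.
  intros Hm He Hlt. pose proof (Rabs_pos D).
  apply (Rmult_lt_compat_r (Rabs D + 1)) in Hlt; [|lra].
  replace (eps / (Rabs D + 1) * (Rabs D + 1)) with eps in Hlt by (field; lra).
  apply Rle_trans with (Rabs D * m * m); [|nra].
  replace (D * m ^ 2) with (D * m * m) by ring.
  apply Rle_trans with (Rabs (D * m * m)); [apply Rle_abs|].
  rewrite !Rabs_mult, (Rabs_pos_eq m) by exact Hm. lra.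
Qed.

Lemma differentiable_of_DL_regular_1 f x y : DL_regular_n f 1 x y ->
  differentiable_pt_lim f x y (dx f x y) (dt f x y).
Proof.
  intros [D [d Hd]] eps.
  assert (He : 0 < eps / (Rabs D + 1))
    by (apply Rdiv_lt_0_compat; [apply cond_pos | pose proof (Rabs_pos D); lra]).
  exists (mkposreal _ (Rmin_pos _ _ (cond_pos d) He)). simpl. intros u v Hu Hv.
  specialize (Hd u v (Rlt_le_trans _ _ _ Hu (Rmin_l _ _)) (Rlt_le_trans _ _ _ Hv (Rmin_l _ _))).
  rewrite DL_pol_1 in Hd.
  set (m := Rmax (Rabs (u - x)) (Rabs (v - y))) in *.
  eapply Rle_trans; [|apply (quadratic_le_linear D)].
  - replace (f u v - f x y - _) with (f u v - (f x y + (dx f x y * (u - x) + dt f x y * (v - y))))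
      by ring. exact Hd.
  - unfold m. eapply Rle_trans; [apply Rabs_pos | apply Rmax_l].
  - apply cond_pos.
  - unfold m. apply Rmax_lub_lt; eapply Rlt_le_trans; [exact Hu|apply Rmin_r|exact Hv|apply Rmin_r].
Qed.

Lemma differentiable_of_Ck phi x y : (forall k, Ck k phi) ->
  differentiable_pt_lim phi x y (dx phi x y) (dt phi x y).
Proof.
  intros H. apply differentiable_of_DL_regular_1, Taylor_Lagrange_2d.
  exists (mkposreal 1 Rlt_0_1). intros; apply ex_diff_n_of_Ck, H.
Qed.

Lemma is_derive_along_curve phi (q : R -> R) t0 dq : (forall k, Ck k phi) ->
  is_derive q t0 dq ->
  is_derive (fun t => phi (q t) t) t0 (dx phi (q t0) t0 * dq + dt phi (q t0) t0).
Proof.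
  intros H Hq. apply is_derive_Reals. rewrite <- (Rmult_1_r (dt phi (q t0) t0)).
  apply (derivable_pt_lim_comp_2d phi q (fun t => t)).
  - apply differentiable_of_Ck, H.
  - apply is_derive_Reals, Hq.
  - apply derivable_pt_lim_id.
Qed.

Lemma continuity_2d_eq0_closure phi T : (forall x t, continuity_2d_pt phi x t) ->
  (forall x t, T < Rabs t -> phi x t = 0) -> forall x s, T <= Rabs s -> phi x s = 0.
Proof.
  intros H HT x s Hs.
  destruct (Rle_lt_or_eq_dec _ _ Hs) as [Hlt|Heq]; [apply HT, Hlt|].
  destruct (Req_dec (phi x s) 0) as [|Hn]; [assumption|exfalso].
  assert (He : 0 < Rabs (phi x s)) by (apply Rabs_pos_lt, Hn).
  destruct (H x s (mkposreal _ He)) as [d Hd]. simpl in Hd. pose proof (cond_pos d).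
  set (w := if Rle_dec 0 s then s + d / 2 else s - d / 2).
  assert (Hw : T < Rabs w /\ Rabs (w - s) < d).
  { unfold w. destruct (Rle_dec 0 s).
    - rewrite Heq, !Rabs_pos_eq by lra. split; lra.
    - rewrite Heq, !Rabs_left by lra. split; lra. }
  specialize (Hd x w). rewrite (HT x w (proj1 Hw)), Rminus_0_l, Rabs_Ropp in Hd.
  unfold Rminus at 1 in Hd. rewrite Rplus_opp_r, Rabs_R0 in Hd.
  specialize (Hd (cond_pos d) (proj2 Hw)). lra.
Qed.

(** * Weak formulation *)
Definition weakly_vanishing (J : (R -> R -> R) -> R -> R) : Prop :=
  forall phi, test_function phi ->
  forall T, (forall x t, T < Rabs t -> phi x t = 0) -> is_RInt (J phi) (- T) T 0.

Definition mpair_deriv N (a q : nat -> R -> R) (phi : R -> R -> R) t : R :=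
  sumN N (fun j => Derive (a j) t * phi (q j t) t
                   + a j t * (dx phi (q j t) t * Derive (q j) t + dt phi (q j t) t)).

Definition pole_pairing N (q A B : nat -> R -> R) (phi : R -> R -> R) t : R :=
  sumN N (fun j => A j t * phi (q j t) t + B j t * dx phi (q j t) t).

Lemma continuous_along_curve (f : R -> R -> R) (q : R -> R) t :
  continuity_2d_pt f (q t) t -> continuous q t -> continuous (fun s => f (q s) s) t.
Proof.
  intros Hf Hq. apply (continuous_comp_2 q (fun s => s) f); [exact Hq|apply continuous_id|].
  apply continuity_2d_pt_filterlim, Hf.
Qed.

Section MovingPairing.

Variables (N : nat) (a q : nat -> R -> R).
Hypothesis hq : forall j, (j < N)%nat -> is_C1 (q j).
Hypothesis ha : forall j, (j < N)%nat -> is_C1 (a j).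

Lemma is_derive_mpair phi t : (forall k, Ck k phi) ->
  is_derive (fun s => mpair N a q s (fun x => phi x s)) t (mpair_deriv N a q phi t).
Proof.
  intros Hphi. apply (is_derive_sumN N (fun j s => a j s * phi (q j s) s)).
  intros j Hj. eapply is_derive_eq.
  - apply (is_derive_mult (a j) (fun s => phi (q j s) s)).
    + apply Derive_correct, (ha j Hj).
    + apply is_derive_along_curve; [exact Hphi|]. apply Derive_correct, (hq j Hj).
    + intros; apply Rmult_comm.
  - unfold plus, mult; simpl. ring.
Qed.

Lemma continuous_mpair_deriv phi t : (forall k, Ck k phi) -> continuous (mpair_deriv N a q phi) t.
Proof.
  intros Hphi. destruct (Hphi 1%nat) as [_ [Hx Ht]].
  apply continuous_sumN. intros j Hj.
  assert (Hqj := C1_continuous _ t (hq j Hj)).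
  apply (continuous_plus (fun s => Derive (a j) s * phi (q j s) s)).
  - apply (continuous_mult (Derive (a j))); [apply (ha j Hj)|].
    apply continuous_along_curve; [apply (Hphi O) | exact Hqj].
  - apply (continuous_mult (a j)); [apply C1_continuous, ha, Hj|].
    apply (continuous_plus (fun s => dx phi (q j s) s * Derive (q j) s)).
    + apply (continuous_mult (fun s => dx phi (q j s) s)); [|apply (hq j Hj)].
      apply continuous_along_curve; [apply Hx | exact Hqj].
    + apply continuous_along_curve; [apply Ht | exact Hqj].
Qed.

Lemma is_RInt_mpair_deriv : weakly_vanishing (mpair_deriv N a q).
Proof.
  intros phi [Hphi _] T HT.
  assert (Hbd : forall s, T <= Rabs s -> mpair N a q s (fun x => phi x s) = 0).
  { intros s Hs. apply sumN_eq0. intros j _.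
    rewrite (continuity_2d_eq0_closure phi T (Hphi O) HT); [ring | exact Hs]. }
  replace 0 with (minus (mpair N a q T (fun x => phi x T))
                        (mpair N a q (- T) (fun x => phi x (- T)))).
  - apply (is_RInt_derive (fun s => mpair N a q s (fun x => phi x s))).
    + intros t _. apply is_derive_mpair, Hphi.
    + intros t _. apply continuous_mpair_deriv, Hphi.
  - rewrite !Hbd; [unfold minus, plus, opp; simpl; ring | |];
      rewrite ?Rabs_Ropp; apply Rle_abs.
Qed.

End MovingPairing.

Lemma bump_mul_not_is_RInt_0 (h : R -> R) t0 d T : 0 < d -> Rabs t0 + d < T ->
  (forall t, continuous h t) -> (forall t, Rabs (t - t0) < d -> 0 < h t0 * h t) ->
  ~ is_RInt (fun t => seval (bump t0 d) t * h t) (- T) T 0.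
Proof.
  intros Hd HT Hc Hsign HI.
  apply (not_is_RInt_0_of_pos (fun t => h t0 * (seval (bump t0 d) t * h t)) T (t0 - d) (t0 + d)).
  - pose proof (Rle_abs (- t0)). rewrite Rabs_Ropp in *. lra.
  - lra.
  - pose proof (Rle_abs t0). lra.
  - intros t. apply (continuous_mult (fun _ => h t0)); [apply continuous_const|].
    apply (continuous_mult (seval (bump t0 d))); [apply continuous_seval | apply Hc].
  - intros t Ht. assert (Ha : Rabs (t - t0) < d) by (apply Rabs_def1; lra).
    pose proof (bump_pos t0 d t Hd Ha). pose proof (Hsign t Ha). nra.
  - intros t Ht. rewrite bump_eq0; [ring | exact Hd |].
    destruct Ht; [rewrite Rabs_left | rewrite Rabs_pos_eq]; lra.
  - pose proof (is_RInt_scal _ _ _ (h t0) _ HI) as HS.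
    replace (scal (h t0) (0 : R_NormedModule)) with 0 in HS
      by (unfold scal; simpl; unfold mult; simpl; ring).
    exact HS.
Qed.

Lemma particles_separated N (q : nat -> R -> R) i t0 :
  (forall j, (j < N)%nat -> continuous (q j) t0) ->
  (forall j, (j < N)%nat -> j <> i -> q j t0 <> q i t0) ->
  exists r d, 0 < r /\ 0 < d /\
    forall j t, (j < N)%nat -> j <> i -> Rabs (t - t0) < d -> r < Rabs (q j t - q i t0).
Proof.
  intros Hc Hd. set (c := q i t0).
  destruct (uniform_radius_finite N (fun j r => j <> i -> 2 * r < Rabs (q j t0 - c)))
    as [r [Hr Hsep]].
  { intros j Hj. destruct (Nat.eq_dec j i) as [->|Hji].
    - exists 1. split; [lra|]. intros; contradiction.
    - assert (0 < Rabs (q j t0 - c)) by (apply Rabs_pos_lt; apply Rminus_eq_contra, Hd; auto).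
      exists (Rabs (q j t0 - c) / 4). split; [lra|]. intros r' Hr' _. lra. }
  destruct (uniform_radius_finite N
              (fun j d => forall t, Rabs (t - t0) < d -> Rabs (q j t - q j t0) < r))
    as [d [Hd0 Hnear]].
  { intros j Hj. destruct (continuous_eps_delta (q j) t0 r (Hc j Hj) Hr) as [d [Hd1 Hd2]].
    exists d. split; [exact Hd1|]. intros d' Hd' t Ht. apply Hd2. lra. }
  exists r, d. split; [exact Hr|]. split; [exact Hd0|]. intros j t Hj Hji Ht.
  pose proof (Hsep j Hj r (conj Hr (Rle_refl r)) Hji).
  pose proof (Hnear j Hj d (conj Hd0 (Rle_refl d)) t Ht) as Hqj.
  rewrite Rabs_minus_sym in Hqj.
  pose proof (Rabs_triang_inv (q j t0 - c) (q j t0 - q j t)).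
  replace (q j t0 - c - (q j t0 - q j t)) with (q j t - c) in * by ring. lra.
Qed.

Section Localization.

Variables (N : nat) (q A B : nat -> R -> R) (e : sexpr) (i : nat) (t0 r : R).
Hypothesis hi : (i < N)%nat.
Hypothesis he : forall y, r <= Rabs (y - q i t0) -> seval e y = 0.
Let h s := A i s * seval e (q i s) + B i s * seval (sderiv e) (q i s).
Let phi d x s := seval e x * seval (bump t0 d) s.

Lemma test_function_tensor_bump d : 0 < d -> test_function (phi d).
Proof.
  intros Hd. split; [intros k; apply Ck_seval_tensor|].
  exists (Rmax (Rabs (q i t0) + r) (Rabs t0 + d)). intros x t Hxt.
  pose proof (Rmax_l (Rabs (q i t0) + r) (Rabs t0 + d)).
  pose proof (Rmax_r (Rabs (q i t0) + r) (Rabs t0 + d)).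
  pose proof (Rabs_triang_inv x (q i t0)). pose proof (Rabs_triang_inv t t0).
  unfold phi. destruct Hxt.
  - rewrite he; [ring | lra].
  - rewrite bump_eq0; [ring | exact Hd | lra].
Qed.

Lemma pole_pairing_tensor_bump d t : 0 < d ->
  (forall j s, (j < N)%nat -> j <> i -> Rabs (s - t0) < d -> r < Rabs (q j s - q i t0)) ->
  pole_pairing N q A B (phi d) t = seval (bump t0 d) t * h t.
Proof.
  intros Hd Hsep.
  assert (Hdx : forall x, dx (phi d) x t = seval (sderiv e) x * seval (bump t0 d) t).
  { intros x. apply is_derive_unique, is_derive_mulr, is_derive_seval. }
  unfold pole_pairing. rewrite (sumN_ext N _ (fun j =>
    (A j t * seval e (q j t) + B j t * seval (sderiv e) (q j t)) * seval (bump t0 d) t))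
    by (intros j _; rewrite Hdx; unfold phi; ring).
  destruct (Rlt_dec (Rabs (t - t0)) d) as [Hin|Hout].
  - rewrite (sumN_single N i); [unfold h; ring | exact hi|]. intros j Hj Hji.
    specialize (Hsep j t Hj Hji Hin).
    rewrite he by lra.
    rewrite <- Derive_seval, (is_derive_unique _ _ _ (is_derive_eq0_outside _ _ _ _ he Hsep)).
    ring.
  - rewrite bump_eq0 by lra. rewrite Rmult_0_l. apply sumN_eq0. intros; ring.
Qed.

Lemma pole_coefficient_eq0 d0 : 0 < d0 ->
  (forall j s, (j < N)%nat -> j <> i -> Rabs (s - t0) < d0 -> r < Rabs (q j s - q i t0)) ->
  (forall t, continuous h t) -> weakly_vanishing (pole_pairing N q A B) -> h t0 = 0.
Proof.
  intros Hd0 Hsep Hc HK.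
  destruct (Req_dec (h t0) 0) as [|Hn]; [assumption|exfalso].
  destruct (sign_persistence h t0 (Hc t0) Hn) as [d2 [Hd2 Hsign]].
  set (d := Rmin d0 d2). assert (Hd : 0 < d) by (apply Rmin_pos; assumption).
  assert (d <= d0 /\ d <= d2) as [Hdd0 Hdd2] by (split; [apply Rmin_l | apply Rmin_r]).
  apply (bump_mul_not_is_RInt_0 h t0 d (Rabs t0 + d + 1)); [exact Hd|lra|exact Hc| |].
  { intros t Ht. apply Hsign. lra. }
  apply (is_RInt_ext (pole_pairing N q A B (phi d))).
  - intros t _. apply pole_pairing_tensor_bump; [exact Hd|].
    intros j s Hj Hji Hs. apply Hsep; [exact Hj|exact Hji|lra].
  - apply HK; [apply test_function_tensor_bump, Hd|].
    intros x t Ht. unfold phi. rewrite bump_eq0; [ring | exact Hd |].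
    pose proof (Rabs_triang_inv t t0). lra.
Qed.

End Localization.

Lemma point_pole_eq0 (a b c r : R) : 0 < r ->
  (forall e, (forall y, r <= Rabs (y - c) -> seval e y = 0) ->
     a * seval e c + b * seval (sderiv e) c = 0) ->
  a = 0 /\ b = 0.
Proof.
  intros Hr Hloc.
  assert (Hb : 0 < seval (bump c r) c).
  { apply bump_pos; [exact Hr|]. unfold Rminus. rewrite Rplus_opp_r, Rabs_R0. exact Hr. }
  assert (Hmono := Hloc (bump c r) (fun y Hy => bump_eq0 c r y Hr Hy)).
  assert (Hdip : b * seval (bump c r) c = 0).
  { eapply eq_trans; [|apply (Hloc (SMul (SAdd SVar (SConst (- c))) (bump c r)))].
    - cbn [sderiv seval]. ring.
    - intros y Hy. cbn [seval]. rewrite bump_eq0 by assumption. ring. }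
  apply Rmult_integral in Hdip. destruct Hdip as [-> | Hz]; [|lra].
  split; [|reflexivity].
  rewrite Rmult_0_l, Rplus_0_r in Hmono.
  apply Rmult_integral in Hmono. destruct Hmono; [assumption | lra].
Qed.

Section PoleCoefficients.

Variables (N : nat) (q A B : nat -> R -> R).
Hypothesis hq : forall j, (j < N)%nat -> is_C1 (q j).
Hypothesis hdist : forall t i j, (i < N)%nat -> (j < N)%nat -> i <> j -> q i t <> q j t.
Hypothesis hA : forall i t, (i < N)%nat -> continuous (A i) t.
Hypothesis hB : forall i t, (i < N)%nat -> continuous (B i) t.

Lemma continuous_pole_test i e t : (i < N)%nat ->
  continuous (fun s => A i s * seval e (q i s) + B i s * seval (sderiv e) (q i s)) t.
Proof.
  intros Hi. assert (Hqi := C1_continuous _ t (hq i Hi)).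
  apply continuous_Rplus; apply continuous_Rmult; auto;
    apply (continuous_comp (q i)); auto; apply continuous_seval.
Qed.

Lemma weakly_vanishing_pole_pairing_iff :
  weakly_vanishing (pole_pairing N q A B) <-> forall i t, (i < N)%nat -> A i t = 0 /\ B i t = 0.
Proof.
  split.
  - intros HK i t0 Hi.
    destruct (particles_separated N q i t0) as [r [d0 [Hr [Hd0 Hsep]]]].
    { intros j Hj. apply C1_continuous, hq, Hj. }
    { intros j Hj Hji. apply hdist; auto. }
    apply (point_pole_eq0 _ _ (q i t0) r Hr). intros e He.
    apply (pole_coefficient_eq0 N q A B e i t0 r Hi He d0 Hd0 Hsep); [|exact HK].
    intros t. apply continuous_pole_test, Hi.
  - intros H phi _ T _. apply is_RInt_eq0_fun. intros t _. apply sumN_eq0.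
    intros j Hj. destruct (H j t Hj) as [-> ->]. ring.
Qed.

Lemma weakly_vanishing_iff_poles (a : nat -> R -> R) (J : (R -> R -> R) -> R -> R) :
  (forall j, (j < N)%nat -> is_C1 (a j)) ->
  (forall phi t, J phi t = mpair_deriv N a q phi t + pole_pairing N q A B phi t) ->
  weakly_vanishing J <-> forall i t, (i < N)%nat -> A i t = 0 /\ B i t = 0.
Proof.
  intros ha HJ. rewrite <- weakly_vanishing_pole_pairing_iff.
  pose proof (is_RInt_mpair_deriv N a q hq ha) as HF.
  split; intros H phi Hphi T HT.
  - apply (is_RInt_ext (fun t => minus (J phi t) (mpair_deriv N a q phi t))).
    { intros t _. rewrite HJ. unfold minus, plus, opp; simpl. ring. }
    replace 0 with (minus (0 : R_NormedModule) 0) by (unfold minus, plus, opp; simpl; ring).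
    apply (is_RInt_minus (V := R_NormedModule) (J phi) (mpair_deriv N a q phi));
      [apply H | apply HF]; assumption.
  - apply (is_RInt_ext (fun t => plus (mpair_deriv N a q phi t) (pole_pairing N q A B phi t))).
    { intros t _. rewrite HJ. reflexivity. }
    replace 0 with (plus (0 : R_NormedModule) 0) by (unfold plus; simpl; ring).
    apply (is_RInt_plus (V := R_NormedModule) (mpair_deriv N a q phi) (pole_pairing N q A B phi));
      [apply HF | apply H]; assumption.
Qed.

End PoleCoefficients.

(** * The reduced Euler-Poincare equation *)

Lemma mul_sub_eq0_iff (a u d : R) : a * (u - d) = 0 <-> (a <> 0 -> d = u).
Proof.
  split.
  - intros H Ha. apply Rmult_integral in H. destruct H; [contradiction | lra].
  - intros H. destruct (Req_dec a 0) as [->|Ha]; [ring|]. rewrite H by exact Ha. ring.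
Qed.

Section ReducedEquation.

Variables (N : nat) (q p v : nat -> R -> R).
Hypothesis hq : forall i, (i < N)%nat -> is_C1 (q i).
Hypothesis hp : forall i, (i < N)%nat -> is_C1 (p i).
Hypothesis hv : forall i, (i < N)%nat -> is_C1 (v i).
Hypothesis hdist : forall t i j, (i < N)%nat -> (j < N)%nat -> i <> j -> q i t <> q j t.
Let force j t := sumN N (fun k => (p j t * p k t + v j t * v k t) * dG (q j t) (q k t)).
Let drift (a : nat -> R -> R) j t := a j t * (ufield N p q (q j t) t - Derive (q j) t).

Lemma continuous_force j t : (j < N)%nat -> continuous (force j) t.
Proof.
  intros Hj. apply continuous_sumN. intros k Hk.
  assert (Hc : forall i, (i < N)%nat -> continuous (q i) t)
    by (intros; apply C1_continuous, hq; auto).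
  apply continuous_Rmult.
  - apply continuous_Rplus; apply continuous_Rmult; apply C1_continuous; auto.
  - destruct (Nat.eq_dec k j) as [->|Hkj].
    + apply (continuous_ext (fun _ => 0)); [|apply continuous_const].
      intros; symmetry; apply dG_diag.
    + apply continuous_dG_comp; auto.
Qed.

Lemma continuous_drift (a : nat -> R -> R) j t : (j < N)%nat -> is_C1 (a j) ->
  continuous (drift a j) t.
Proof.
  intros Hj Ha. apply (continuous_mult (a j)); [apply C1_continuous, Ha|].
  apply (continuous_minus (fun s => ufield N p q (q j s) s)); [|apply (hq j Hj)].
  apply continuous_sumN. intros k Hk.
  apply (continuous_mult (p k)); [apply C1_continuous; auto|].
  apply continuous_G_comp; apply C1_continuous; auto.
Qed.

Lemma force_uxfield j t :
  force j t = p j t * uxfield N p q (q j t) t + v j t * uxfield N v q (q j t) t.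
Proof.
  unfold force, uxfield. rewrite <- !sumN_scal, <- sumN_plus. apply sumN_ext. intros; ring.
Qed.

Lemma weak_integrand_x_split phi t :
  weak_integrand_x N q p v phi t = mpair_deriv N p q phi t
    + pole_pairing N q (fun j s => - (Derive (p j) s + force j s)) (drift p) phi t.
Proof.
  unfold weak_integrand_x, mpair, mpair_deriv, pole_pairing.
  rewrite <- !sumN_plus, <- !sumN_minus. apply sumN_ext. intros j _.
  rewrite force_uxfield. unfold drift. ring.
Qed.

Lemma weak_integrand_y_split phi t :
  weak_integrand_y N q p v phi t = mpair_deriv N v q phi t
    + pole_pairing N q (fun j s => - Derive (v j) s) (drift v) phi t.
Proof.
  unfold weak_integrand_y, mpair, mpair_deriv, pole_pairing.
  rewrite <- !sumN_plus, <- !sumN_minus. apply sumN_ext. intros j _.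
  unfold drift. ring.
Qed.

Lemma weak_solution_x_iff :
  weak_solution_x N q p v <->
  forall i t, (i < N)%nat ->
    Derive (p i) t = - sumN N (fun j => (p i t * p j t + v i t * v j t) * dG (q i t) (q j t))
    /\ (p i t <> 0 -> Derive (q i) t = sumN N (fun j => p j t * G (q i t) (q j t))).
Proof.
  assert (HA : forall i t, (i < N)%nat ->
            continuous (fun s => - (Derive (p i) s + force i s)) t).
  { intros i t Hi. apply (continuous_opp (fun s => Derive (p i) s + force i s)).
    apply continuous_Rplus; [apply (hp i Hi) | apply continuous_force, Hi]. }
  transitivity (weakly_vanishing (weak_integrand_x N q p v)); [reflexivity|].
  rewrite (weakly_vanishing_iff_poles N q _ _ hq hdist HA
             (fun i t Hi => continuous_drift p i t Hi (hp i Hi)) p _ hp weak_integrand_x_split).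
  unfold force, drift.
  split; intros H i t Hi; destruct (H i t Hi) as [H1 H2];
    (split; [lra | apply mul_sub_eq0_iff, H2]).
Qed.

Lemma weak_solution_y_iff :
  weak_solution_y N q p v <->
  forall i t, (i < N)%nat ->
    Derive (v i) t = 0
    /\ (v i t <> 0 -> Derive (q i) t = sumN N (fun j => p j t * G (q i t) (q j t))).
Proof.
  assert (HA : forall i t, (i < N)%nat -> continuous (fun s => - Derive (v i) s) t)
    by (intros i t Hi; apply (continuous_opp (Derive (v i))), (hv i Hi)).
  transitivity (weakly_vanishing (weak_integrand_y N q p v)); [reflexivity|].
  rewrite (weakly_vanishing_iff_poles N q _ _ hq hdist HA
             (fun i t Hi => continuous_drift v i t Hi (hv i Hi)) v _ hv weak_integrand_y_split).
  unfold drift.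
  split; intros H i t Hi; destruct (H i t Hi) as [H1 H2];
    (split; [lra | apply mul_sub_eq0_iff, H2]).
Qed.

End ReducedEquation.

Theorem mainTheorem7 (N : nat) (q p v : nat -> R -> R)
  (hq : forall i, (i < N)%nat -> is_C1 (q i))
  (hp : forall i, (i < N)%nat -> is_C1 (p i))
  (hv : forall i, (i < N)%nat -> is_C1 (v i))
  (hdist : forall t i j, (i < N)%nat -> (j < N)%nat -> i <> j -> q i t <> q j t) :
  (weak_solution_x N q p v <->
     forall i t, (i < N)%nat ->
       Derive (p i) t
         = - sumN N (fun j => (p i t * p j t + v i t * v j t) * dG (q i t) (q j t))
       /\ (p i t <> 0 -> Derive (q i) t = sumN N (fun j => p j t * G (q i t) (q j t))))
  /\
  (weak_solution_y N q p v <->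
     forall i t, (i < N)%nat ->
       Derive (v i) t = 0
       /\ (v i t <> 0 -> Derive (q i) t = sumN N (fun j => p j t * G (q i t) (q j t))))
  /\
  (forall i t, (i < N)%nat ->
     let qt := fun j => q j t in
     let pt := fun j => p j t in
     let vt := fun j => v j t in
     is_derive (fun x => Ham N (upd qt i x) pt vt) (q i t)
       (sumN N (fun j => (p i t * p j t + v i t * v j t) * dG (q i t) (q j t)))
     /\ is_derive (fun x => Ham N qt (upd pt i x) vt) (p i t)
          (sumN N (fun j => p j t * G (q i t) (q j t)))
     /\ sumN N (fun j => p j t * G (q i t) (q j t)) = ufield N p q (q i t) t
     /\ is_derive (fun x => Ham N qt pt (upd vt i x)) (v i t)
          (sumN N (fun j => v j t * G (q i t) (q j t)))
     /\ sumN N (fun j => v j t * G (q i t) (q j t)) = ufield N v q (q i t) t).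
Proof.
  split; [|split].
  - apply weak_solution_x_iff; assumption.
  - apply weak_solution_y_iff; assumption.
  - intros i t Hi qt pt vt. split; [|split; [|split; [|split]]]; try reflexivity.
    + apply is_derive_Ham_q; [exact Hi|]. intros j Hj Hji. apply hdist; auto.
    + apply is_derive_Ham_p, Hi.
    + apply is_derive_Ham_v, Hi.
Qed.
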